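(* Let $p$ be an odd prime, let $v$ be an integer with $1<v<p-1$, let $g\in\{2,\dots,p-1\}$ be a primitive root modulo $p$, let $t\ge1$ and $b\in\{0,\dots,v-1\}$. Let $$\rho(b,t)=\#\{i\in[1,p-1]:\ g^i\,\%\,p\not\equiv b,\ g^{i+t+1}\,\%\,p\not\equiv b,\ g^{i+j}\,\%\,p\equiv b\ (1\le j\le t)\},$$ all congruences modulo $v$. Write $p=q_t g^t+r_t$ and $p=q_{t+1}g^{t+1}+r_{t+1}$ with $0\le r_t<g^t$, $0\le r_{t+1}<g^{t+1}$. Then $$\left\lfloor\tfrac{g}{v}\right\rfloor^{t-1}\left\lfloor\tfrac{(v-1)g}{v}\right\rfloor\left\lfloor\tfrac{q_t}{v}\right\rfloor-\left\lceil\tfrac{g}{v}\right\rceil^{t}\left\lceil\tfrac{(v-1)g}{v}\right\rceil\left\lceil\tfrac{q_{t+1}+1}{v}\right\rceil\ \le\ \rho(b,t)\ \le\ \left\lceil\tfrac{g}{v}\right\rceil^{t-1}\left\lceil\tfrac{(v-1)g}{v}\right\rceil\left\lceil\tfrac{q_t+1}{v}\right\rceil-\left\lfloor\tfrac{g}{v}\right\rfloor^{t}\left\lfloor\tfrac{(v-1)g}{v}\right\rfloor\left\lfloor\tfrac{q_{t+1}}{v}\right\rfloor.$$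
   Context: $x\,\%\,p$ denotes the least nonnegative remainder of the integer $x$ modulo $p$. $\rho(b,t)$ counts runs of length exactly $t$ of symbol $b$ in the periodic sequence $((g^i\,\%\,p)\,\%\,v)_i$. *)

From mathcomp Require Import all_boot all_order all_algebra.
Set Implicit Arguments. Unset Strict Implicit. Unset Printing Implicit Defensive.

Definition primitive_root_mod (p g : nat) : bool :=
  (g ^ (p.-1) %% p == 1 %% p) &&
  [forall k : 'I_(p.-1), (0 < k) ==> (g ^ k %% p != 1 %% p)].

Definition ceildiv (a d : nat) : nat := (a + d.-1) %/ d.

Definition rho (p g v b t : nat) : nat :=
  count (fun i => [&& (g ^ i %% p) %% v != b,
                      (g ^ (i + t + 1) %% p) %% v != b &
                      all (fun j => (g ^ (i + j) %% p) %% v == b) (iota 1 t)])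
        (iota 1 p.-1).

From mathcomp Require Import all_boot all_order all_algebra.
From mathcomp Require Import zify.

Set Implicit Arguments.
Unset Strict Implicit.
Unset Printing Implicit Defensive.

(* Put x_0 = x and x_j = g x_(j-1) mod p = g x_(j-1) - p c_j.  The carries
   c_1, ..., c_(k+1) are the base-g digits of floor(g^(k+1) x / p), most
   significant first.  Reducing mod v, "x_0 is not congruent to b but x_1, ...,
   x_(k+1) are" says that c_1 is an entry digit for x mod v and that c_2, ...,
   c_(k+1) are stay digits, the latter a condition on each digit alone.  For a
   fixed m = floor(g^(k+1) x / p) the x in [0, p) form an interval of length q or
   q + 1, q = floor(p / g^(k+1)), on which the entry condition is v-periodic.  The
   stay digits form one residue class mod v and the entry digits make up the
   other v - 1 residues on average, which bounds the number N_(k+1) of such x by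
   floors and ceilings of g / v, (v - 1) g / v and q / v.  Since g is a primitive
   root, g^i mod p runs over [1, p - 1], so rho(b, t) = N_t - N_(t+1). *)

Lemma ceildivE n d : 0 < d -> ceildiv n d = n %/ d + (0 < n %% d).
Proof.
move=> d_gt0; rewrite /ceildiv {1}(divn_eq n d) -addnA divnMDl //; congr (_ + _).
have := ltn_pmod n d_gt0; case: (n %% d) => [|r] lt_r_d.
  by rewrite add0n divn_small ?ltn_predL.
by rewrite addSnnS prednK // divnDr ?dvdnn // divnn d_gt0 divn_small // ltnW.
Qed.

Lemma leq_ceildivLR n d x : 0 < d -> (ceildiv n d <= x) = (n <= x * d).
Proof. by move=> d_gt0; rewrite /ceildiv -ltnS ltn_divLR // mulSn; lia. Qed.

Lemma ceildiv_bounds n d : 0 < d -> n <= ceildiv n d * d < n + d.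
Proof.
move=> d_gt0; rewrite -leq_ceildivLR //= /ceildiv.
have := leq_divM (n + d.-1) d; lia.
Qed.

Lemma ceildivD_bounds a n d : 0 < d ->
  ceildiv a d + n %/ d <= ceildiv (a + n) d <= ceildiv a d + (n %/ d).+1.
Proof.
move=> d_gt0; have /andP[le_a lt_a] := ceildiv_bounds a d_gt0.
have /andP[le_an lt_an] := ceildiv_bounds (a + n) d_gt0.
have le_n := leq_divM n d; have lt_n := ltn_ceil n d_gt0.
have le_q_c : n %/ d <= ceildiv (a + n) d by rewrite -(leq_pmul2r d_gt0); lia.
rewrite addnC -leq_subRL // leq_ceildivLR // mulnBl leq_ceildivLR // mulnDl; lia.
Qed.

Lemma ceildiv_mulKn a d : 0 < d -> ceildiv (d * a) d = a.
Proof. by move=> d_gt0; rewrite ceildivE // mulKn // modnMr addn0. Qed.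

Lemma divn_subMl n m d : 0 < d -> n <= m * d -> (m * d - n) %/ d = m - ceildiv n d.
Proof.
move=> d_gt0 le_n_md; have /andP[le_n lt_n] := ceildiv_bounds n d_gt0.
have le_c_m : ceildiv n d <= m by rewrite leq_ceildivLR.
apply/eqP; rewrite eqn_leq leq_divRL // -ltnS ltn_divLR //.
rewrite mulSn mulnBl; lia.
Qed.

Lemma ceildiv_subMl n m d : 0 < d -> n <= m * d -> ceildiv (m * d - n) d = m - n %/ d.
Proof.
move=> d_gt0 le_n_md; have le_n := leq_divM n d; have lt_n := ltn_ceil n d_gt0.
have le_q_m : n %/ d <= m by rewrite -(leq_pmul2r d_gt0) (leq_trans le_n).
have /andP[le_mdn _] := ceildiv_bounds (m * d - n) d_gt0.
apply/eqP; rewrite eqn_leq leq_ceildivLR // mulnBl leq_sub2l //=.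
rewrite -ltnS -(ltn_pmul2r d_gt0) mulSn mulnBl; lia.
Qed.

Lemma divn_ceildiv_range G p m x : 0 < G -> 0 < p ->
  ceildiv (m * p) G <= x < ceildiv (m.+1 * p) G -> G * x %/ p = m.
Proof.
move=> G_gt0 p_gt0 /andP[]; rewrite leq_ceildivLR // => lo.
rewrite ltnNge leq_ceildivLR // -ltnNge => hi.
apply/eqP; rewrite eqn_leq -ltnS ltn_divLR // leq_divRL //.
by rewrite !(mulnC G) lo hi.
Qed.

Lemma modn_mul_divn G a p : 0 < p ->
  G * a %/ p %% G = G * (a %% p) %/ p.
Proof.
move=> p_gt0; have [-> | G_gt0] := posnP G; first by rewrite !mul0n div0n.
have lt_r : G * (a %% p) %/ p < G by rewrite ltn_divLR // ltn_pmul2l ?ltn_pmod.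
by rewrite {1}(divn_eq a p) mulnDr mulnA divnMDl // mulnC modnMDl modn_small.
Qed.

Lemma divn_mul_divn G a p : 0 < G -> G * a %/ p %/ G = a %/ p.
Proof. by move=> G_gt0; rewrite -divnMA [p * G]mulnC divnMl. Qed.

Lemma eqn_mod_coprime_mul2l c x y v :
  coprime c v -> (c * x == c * y %[mod v]) = (x == y %[mod v]).
Proof.
move=> cop; wlog le_xy : x y / x <= y.
  by move=> W; case: (leqP x y) => [/W //|/ltnW/W]; rewrite eq_sym [in RHS]eq_sym.
rewrite eq_sym [in RHS]eq_sym !eqn_mod_dvd ?leq_mul2l ?le_xy ?orbT //.
by rewrite -mulnBr Gauss_dvdr // coprime_sym.
Qed.

Lemma count_iota_sum (P : pred nat) a n :
  count P (iota a n) = \sum_(a <= x < a + n) P x.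
Proof. by rewrite -sum1_count big_mkcond /index_iota addKn. Qed.

Section PeriodicSum.

Variables (F : nat -> nat) (v : nat).

Hypothesis F_periodic : forall x, F (x + v) = F x.

Lemma sum_period_shift a : \sum_(a <= x < a + v) F x = \sum_(0 <= x < v) F x.
Proof.
elim: a => [//|a IHa]; rewrite -IHa; apply/(@addnI (F a)).
rewrite -big_ltn ?addSn ?ltnS ?leq_addr // big_nat_recr ?leq_addr //=.
by rewrite F_periodic addnC.
Qed.

Lemma sum_periods a k : \sum_(a <= x < a + k * v) F x = k * \sum_(0 <= x < v) F x.
Proof.
elim: k a => [|k IHk] a; first by rewrite addn0 big_geq.
rewrite (big_cat_nat _ (n := a + v)) ?leq_add2l ?mulSn ?leq_addr //=.
by rewrite sum_period_shift addnA IHk.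
Qed.

Lemma sum_periodic_bounds a n : 0 < v ->
  n %/ v * \sum_(0 <= x < v) F x <= \sum_(a <= x < a + n) F x
                                 <= ceildiv n v * \sum_(0 <= x < v) F x.
Proof.
move=> v_gt0; set b := a + n %/ v * v.
have split_n : \sum_(a <= x < a + n) F x
    = n %/ v * \sum_(0 <= x < v) F x + \sum_(b <= x < b + n %% v) F x.
  rewrite {1}(divn_eq n v) addnA (big_cat_nat _ (n := b)) ?leq_addr //.
  by rewrite sum_periods.
have rest_le : \sum_(b <= x < b + n %% v) F x <= \sum_(0 <= x < v) F x.
  rewrite -(sum_period_shift b).
  rewrite [X in _ <= X](big_cat_nat _ (n := b + n %% v)) ?leq_addr //.
  by rewrite leq_add2l ltnW ?ltn_pmod.
rewrite split_n leq_addr ceildivE // mulnDl leq_add2l /=.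
have [-> | _] := posnP (n %% v); last by rewrite mul1n.
by rewrite addn0 big_geq.
Qed.

End PeriodicSum.

Lemma sum_nat_mul (F : nat -> nat) n k :
  \sum_(0 <= m < n * k) F m = \sum_(0 <= d < n) \sum_(0 <= e < k) F (d * k + e).
Proof.
rewrite big_nat_mul; apply: eq_bigr => d _.
rewrite -{1}(add0n (d * k)) big_addn mulSn addnK.
by apply: eq_bigr => e _; rewrite addnC.
Qed.

Lemma sum_nat_blocks (F : nat -> nat) (f : nat -> nat) n :
  f 0 = 0 -> (forall m, f m <= f m.+1) ->
  \sum_(0 <= x < f n) F x = \sum_(0 <= m < n) \sum_(f m <= x < f m.+1) F x.
Proof.
move=> f0 f_incr; elim: n => [|n IHn]; first by rewrite f0 !big_geq.
by rewrite big_nat_recr //= -IHn -big_cat_nat.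
Qed.

Lemma perm_map_in (T : eqType) (f : T -> T) (s : seq T) :
  uniq s -> {in s &, injective f} -> {in s, forall x, f x \in s} ->
  perm_eq [seq f x | x <- s] s.
Proof.
move=> s_uniq f_inj f_in; have fs_uniq : uniq [seq f x | x <- s].
  by rewrite map_inj_in_uniq.
apply: uniq_perm => //; apply: (uniq_min_size fs_uniq _ _).2; last by rewrite size_map.
by move=> _ /mapP[x sx ->]; exact: f_in.
Qed.

Lemma perm_iota_affine_mod a c v : coprime c v ->
  perm_eq [seq (a + c * x) %% v | x <- iota 0 v] (iota 0 v).
Proof.
move=> cop; apply: perm_map_in; rewrite ?iota_uniq //.
  move=> x y; rewrite !mem_iota !add0n => /andP[_ lt_x_v] /andP[_ lt_y_v] /eqP.
  by rewrite eqn_modDl eqn_mod_coprime_mul2l // !modn_small // => /eqP.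
by move=> x; rewrite !mem_iota !add0n => /andP[_ /(leq_ltn_trans (leq0n x))/ltn_pmod->].
Qed.

Lemma sum_iota_affine_mod (F : nat -> nat) a c v : coprime c v ->
  \sum_(0 <= x < v) F ((a + c * x) %% v) = \sum_(0 <= x < v) F x.
Proof.
move=> cop; rewrite -(big_map (fun x => (a + c * x) %% v) xpredT F).
by apply: perm_big; rewrite /index_iota subn0 perm_iota_affine_mod.
Qed.

Lemma sum_iota_affine_mod_eq a c v y : 0 < v -> coprime c v ->
  \sum_(0 <= x < v) ((a + c * x) %% v == y %% v) = 1.
Proof.
move=> v_gt0 cop; rewrite (sum_iota_affine_mod (fun x => x == y %% v)) //.
rewrite -[in index_iota _ v](add0n v) -count_iota_sum.
by rewrite (count_uniq_mem _ (iota_uniq 0 v)) mem_iota ltn_pmod.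
Qed.

Section RunDigits.

Variables p v g b : nat.

(* If x = b (mod v), then g x - p e = b (mod v) iff [stay_digit e]; if x = r
   (mod v) with r <> b, then g x - p e = b (mod v) iff [entry_digit e r]. *)
Definition stay_digit (e : nat) : bool := (b + p * e) %% v == (g * b) %% v.

Definition entry_digit (d r : nat) : bool :=
  (r != b) && ((g * r) %% v == (b + p * d) %% v).

Fixpoint stay_digits (k m : nat) : bool :=
  if k is k'.+1 then stay_digit (m %% g) && stay_digits k' (m %/ g) else true.

Definition precedes_run (t x : nat) : bool :=
  (x %% v != b) && all (fun j => g ^ j * x %% p %% v == b) (iota 1 t).

Hypotheses (p_gt0 : 0 < p) (v_gt0 : 0 < v) (g_gt0 : 0 < g) (b_lt_v : b < v).

Hypothesis p_coprime_v : coprime p v.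

Lemma orbit_step_mod y :
  (g * y %% p %% v == b) = (g * y %% v == (b + p * (g * y %/ p)) %% v).
Proof.
rewrite {2}(divn_eq (g * y) p) [_ * p]mulnC addnC eq_sym eqn_modDr.
by rewrite (modn_small b_lt_v) eq_sym.
Qed.

Lemma stay_orbit_digits k y : y < p ->
  all (fun j => g ^ j * y %% p %% v == b) (iota 0 k.+1)
  = (y %% v == b) && stay_digits k (g ^ k * y %/ p).
Proof.
move=> lt_y_p; elim: k => [|k IHk]; first by rewrite /= expn0 mul1n (modn_small lt_y_p).
rewrite -addn1 iotaD all_cat all_seq1 add0n.
rewrite [RHS]/= expnS -mulnA divn_mul_divn // modn_mul_divn // andbCA -IHk [RHS]andbC.
apply: andb_id2l => stays_k.
have /eqP z_b : g ^ k * y %% p %% v == b.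
  by move/allP: stays_k; apply; rewrite mem_iota add0n ltnSn.
set z := g ^ k * y %% p in z_b *.
by rewrite -modnMmr orbit_step_mod -/z -modnMmr z_b eq_sym.
Qed.

Lemma precedes_run_digits k x :
  precedes_run k.+1 x =
  entry_digit (g ^ k.+1 * x %/ p %/ g ^ k) (x %% v)
  && stay_digits k (g ^ k.+1 * x %/ p %% g ^ k).
Proof.
rewrite expnSr -mulnA divn_mul_divn ?expn_gt0 ?g_gt0 // modn_mul_divn //.
rewrite /precedes_run -[1]addn0 iotaDl all_map.
rewrite (eq_all (a2 := fun j => g ^ j * (g * x %% p) %% p %% v == b)); last first.
  by move=> j /=; rewrite modnMmr add1n expnSr mulnA.
rewrite stay_orbit_digits ?ltn_pmod // andbA; congr (_ && _).
by rewrite orbit_step_mod /entry_digit modnMmr.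
Qed.

Lemma stay_digit_periodic e : stay_digit (e + v) = stay_digit e.
Proof. by rewrite /stay_digit mulnDr addnA addnC modnMDl. Qed.

Lemma sum_stay_digit_period : \sum_(0 <= e < v) stay_digit e = 1.
Proof. exact: sum_iota_affine_mod_eq. Qed.

Lemma sum_stay_digit_bounds :
  g %/ v <= \sum_(0 <= e < g) stay_digit e <= ceildiv g v.
Proof.
have periodic e : (stay_digit (e + v) : nat) = stay_digit e.
  by rewrite stay_digit_periodic.
have := sum_periodic_bounds periodic 0 g v_gt0.
by rewrite sum_stay_digit_period !muln1.
Qed.

Lemma sum_stay_digits k :
  \sum_(0 <= m < g ^ k) stay_digits k m = (\sum_(0 <= e < g) stay_digit e) ^ k.
Proof.
elim: k => [|k IHk]; first by rewrite expn0 big_nat1.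
rewrite !expnSr sum_nat_mul -IHk big_distrl; apply: eq_bigr => d _.
rewrite big_distrr; apply: eq_big_nat => e /andP[_ lt_e_g] /=.
rewrite modnMDl modn_small // divnMDl // divn_small // addn0.
by rewrite mulnb andbC.
Qed.

Definition entry_count (d : nat) : nat := \sum_(0 <= r < v) entry_digit d r.

Lemma entry_count_stay_digit d :
  entry_count d + stay_digit d = \sum_(0 <= r < v) (g * r %% v == (b + p * d) %% v).
Proof.
rewrite (bigD1_seq b) ?mem_iota ?iota_uniq ?subn0 // addnC /stay_digit eq_sym.
congr (_ + _).
rewrite big_mkcond; apply: eq_bigr => r _.
by rewrite /entry_digit; case: (r != b).
Qed.

(* Each residue r solves g r = b + p d (mod v) for exactly one d mod v, and
   shifting d by g amounts to shifting r by p, so the number of solutions is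
   both v- and g-periodic in d; summing it over g v consecutive d gives g. *)
Lemma sum_entry_count :
  \sum_(0 <= d < g) entry_count d + \sum_(0 <= d < g) stay_digit d = g.
Proof.
pose sol d := \sum_(0 <= r < v) (g * r %% v == (b + p * d) %% v).
rewrite -big_split /=; under eq_bigr do rewrite entry_count_stay_digit -/(sol _).
have sol_periodic_v d : sol (d + v) = sol d.
  by rewrite /sol mulnDr addnA; under eq_bigr do rewrite [in X in _ == X]addnC modnMDl.
have sol_periodic_g d : sol (d + g) = sol d.
  rewrite /sol -(sum_iota_affine_mod _ p (coprime1n v)).
  apply: eq_bigr => r _; rewrite mul1n modnMmr mulnDr [g * p]mulnC mulnDr addnA.
  by rewrite [p * g + _]addnC eqn_modDr.
have sum_sol_v : \sum_(0 <= d < v) sol d = v.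
  rewrite /sol exchange_big /=.
  under eq_bigr do under eq_bigr do rewrite eq_sym.
  under eq_bigr do rewrite sum_iota_affine_mod_eq //.
  by rewrite sum_nat_const_nat subn0 muln1.
have := sum_periods sol_periodic_v 0 g; have := sum_periods sol_periodic_g 0 v.
rewrite !add0n mulnC => ->; rewrite sum_sol_v => /eqP.
by rewrite [g * v]mulnC eqn_pmul2l // => /eqP.
Qed.

Lemma sum_entry_count_bounds :
  ((v - 1) * g) %/ v <= \sum_(0 <= d < g) entry_count d <= ceildiv ((v - 1) * g) v.
Proof.
have vg : (v - 1) * g = g * v - g by rewrite mulnBl mul1n mulnC.
have le_g_gv : g <= g * v by rewrite leq_pmulr.
rewrite vg divn_subMl // ceildiv_subMl //.
have := sum_entry_count; have := sum_stay_digit_bounds; lia.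
Qed.

Lemma sum_entry_stay_digits k :
  \sum_(0 <= m < g ^ k.+1) stay_digits k (m %% g ^ k) * entry_count (m %/ g ^ k)
  = (\sum_(0 <= d < g) entry_count d) * (\sum_(0 <= e < g) stay_digit e) ^ k.
Proof.
have gk_gt0 : 0 < g ^ k by rewrite expn_gt0 g_gt0.
rewrite expnS sum_nat_mul -sum_stay_digits big_distrl; apply: eq_bigr => d _.
rewrite big_distrr; apply: eq_big_nat => e /andP[_ lt_e] /=.
by rewrite modnMDl modn_small // divnMDl // divn_small // addn0 mulnC.
Qed.

Lemma sum_entry_digit_bounds d a n :
  n %/ v * entry_count d <= \sum_(a <= x < a + n) entry_digit d (x %% v)
                        <= ceildiv n v * entry_count d.
Proof.
have periodic x : (entry_digit d ((x + v) %% v) : nat) = entry_digit d (x %% v).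
  by rewrite modnDr.
have := sum_periodic_bounds periodic a n v_gt0.
suff -> : \sum_(0 <= x < v) entry_digit d (x %% v) = entry_count d by [].
by apply: eq_big_nat => x /andP[_ lt_x_v]; rewrite modn_small.
Qed.

Lemma count_precedes_run_fibers k :
  count (precedes_run k.+1) (iota 0 p) =
  \sum_(0 <= m < g ^ k.+1) stay_digits k (m %% g ^ k) *
    \sum_(ceildiv (m * p) (g ^ k.+1) <= x < ceildiv (m.+1 * p) (g ^ k.+1))
      entry_digit (m %/ g ^ k) (x %% v).
Proof.
set G := g ^ k.+1; have G_gt0 : 0 < G by rewrite expn_gt0 g_gt0.
have fiber_incr m : ceildiv (m * p) G <= ceildiv (m.+1 * p) G.
  have /andP[lo _] := ceildivD_bounds (m * p) p G_gt0.
  by rewrite mulSnr (leq_trans (leq_addr _ _) lo).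
rewrite count_iota_sum add0n -[in index_iota _ p](ceildiv_mulKn p G_gt0).
have fiber0 : ceildiv (0 * p) G = 0 by rewrite /ceildiv add0n divn_small ?ltn_predL.
rewrite (@sum_nat_blocks _ (fun m => ceildiv (m * p) G) G) //.
apply: eq_bigr => m _; rewrite big_distrr; apply: eq_big_nat => x fiber_x /=.
by rewrite precedes_run_digits (divn_ceildiv_range G_gt0 p_gt0 fiber_x) mulnb andbC.
Qed.

Lemma fiber_sum_bounds G m d : 0 < G ->
  p %/ G %/ v * entry_count d
  <= \sum_(ceildiv (m * p) G <= x < ceildiv (m.+1 * p) G) entry_digit d (x %% v)
  <= ceildiv (p %/ G).+1 v * entry_count d.
Proof.
move=> G_gt0; have /andP[] := ceildivD_bounds (m * p) p G_gt0; rewrite -mulSnr.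
set lo := ceildiv (m * p) G; set hi := ceildiv _ G; set q := p %/ G => lo_q_hi hi_lo_q.
have le_lo_hi : lo <= hi by apply: leq_trans lo_q_hi; apply: leq_addr.
have /andP[sum_lo sum_hi] := sum_entry_digit_bounds d lo (hi - lo).
rewrite subnKC // in sum_lo sum_hi; apply/andP; split.
  by apply: leq_trans sum_lo; rewrite leq_mul2r leq_div2r ?orbT // leq_subRL.
apply: leq_trans sum_hi _; rewrite leq_mul2r /ceildiv leq_div2r ?orbT //.
by rewrite leq_add2r leq_subLR.
Qed.

Lemma count_precedes_run_bounds k :
  (g %/ v) ^ k * (((v - 1) * g) %/ v) * (p %/ g ^ k.+1 %/ v)
  <= count (precedes_run k.+1) (iota 0 p)
  <= (ceildiv g v) ^ k * ceildiv ((v - 1) * g) v * ceildiv (p %/ g ^ k.+1).+1 v.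
Proof.
have G_gt0 : 0 < g ^ k.+1 by rewrite expn_gt0 g_gt0.
set T := \sum_(0 <= m < g ^ k.+1) stay_digits k (m %% g ^ k) * entry_count (m %/ g ^ k).
have /andP[count_lo count_hi] :
    p %/ g ^ k.+1 %/ v * T <= count (precedes_run k.+1) (iota 0 p)
                          <= ceildiv (p %/ g ^ k.+1).+1 v * T.
  rewrite count_precedes_run_fibers !big_distrr /=.
  apply/andP; split; apply: leq_sum => m _; rewrite mulnCA; apply: leq_mul => //;
    by case/andP: (fiber_sum_bounds m (m %/ g ^ k) G_gt0) => fiber_lo fiber_hi.
have /andP[stay_lo stay_hi] := sum_stay_digit_bounds.
have /andP[entry_lo entry_hi] := sum_entry_count_bounds.
have leq_expk m n : m <= n -> m ^ k <= n ^ k.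
  by have [-> // | k_gt0] := posnP k; rewrite leq_exp2r.
rewrite /T sum_entry_stay_digits in count_lo count_hi; apply/andP; split.
  apply: leq_trans count_lo; rewrite [X in _ <= X]mulnC [_ * _ ^ k]mulnC.
  by rewrite !leq_mul ?leq_expk.
apply: leq_trans count_hi _; rewrite mulnC [_ * _ ^ k]mulnC.
by rewrite !leq_mul ?leq_expk.
Qed.

End RunDigits.

Lemma count_predI_predC (T : Type) (a c : pred T) (s : seq T) :
  count (predI a c) s + count (predI (predC a) c) s = count c s.
Proof. by rewrite -!count_filter count_predC size_filter. Qed.

Lemma precedes_runS p v g b t x :
  precedes_run p v g b t.+1 x =
  precedes_run p v g b t x && (g ^ t.+1 * x %% p %% v == b).
Proof.
by rewrite /precedes_run -(addn1 t) iotaD all_cat all_seq1 add1n addn1 andbA.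
Qed.

Lemma precedes_run0 p v g b t : 0 < t -> precedes_run p v g b t 0 = false.
Proof.
by case: t => // t _; rewrite /precedes_run /= muln0 !mod0n; case: (0 == b).
Qed.

Lemma primitive_root_coprime p g : 1 < p -> primitive_root_mod p g -> coprime g p.
Proof.
move=> p_gt1 /andP[/eqP g_order _].
have p1_gt0 : 0 < p.-1 by rewrite -subn1 subn_gt0.
by rewrite -(@coprime_pexpl p.-1) // -coprime_modl g_order coprime_modl coprime1n.
Qed.

Lemma primitive_root_expn_inj p g i j : primitive_root_mod p g -> coprime g p ->
  0 < i -> i <= j -> j < p -> g ^ i = g ^ j %[mod p] -> i = j.
Proof.
move=> /andP[_ /forallP g_prim] g_cop i_gt0 le_ij j_lt_p eq_ij.
have /eqP : g ^ i * g ^ (j - i) = g ^ i * 1 %[mod p].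
  by rewrite [g ^ i * 1]muln1 -expnD subnKC.
rewrite eqn_mod_coprime_mul2l ?coprimeXl //.
have lt_ji_p1 : j - i < p.-1 by lia.
have /implyP := g_prim (Ordinal lt_ji_p1); rewrite /= subn_gt0 => g_order.
have [/g_order/negbTE-> // | le_ji _] := ltnP i j.
by apply/eqP; rewrite eqn_leq le_ij.
Qed.

Lemma perm_iota_expn_mod p g : prime p -> primitive_root_mod p g ->
  perm_eq [seq g ^ i %% p | i <- iota 1 p.-1] (iota 1 p.-1).
Proof.
move=> p_prime g_prim; have p_gt1 := prime_gt1 p_prime.
have g_cop := primitive_root_coprime p_gt1 g_prim.
apply: perm_map_in; rewrite ?iota_uniq //.
  move=> i j; rewrite !mem_iota add1n prednK ?(ltnW p_gt1) // => /andP[i_gt0 i_lt_p].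
  move=> /andP[j_gt0 j_lt_p] eq_ij.
  have [le_ij | /ltnW le_ji] := leqP i j.
    exact: primitive_root_expn_inj g_prim g_cop i_gt0 le_ij j_lt_p eq_ij.
  exact/esym/(primitive_root_expn_inj g_prim g_cop j_gt0 le_ji i_lt_p)/esym.
move=> i _; rewrite mem_iota add1n prednK ?ltn_pmod ?(ltnW p_gt1) // andbT lt0n.
apply: contraTneq (coprimeXl i g_cop) => g_i_0.
by rewrite -coprime_modl g_i_0 /coprime gcd0n neq_ltn p_gt1 orbT.
Qed.

Lemma rho_add_count_precedes_run p g v b t :
  prime p -> primitive_root_mod p g -> 0 < t ->
  rho p g v b t + count (precedes_run p v g b t.+1) (iota 0 p)
  = count (precedes_run p v g b t) (iota 0 p).
Proof.
move=> p_prime g_prim t_gt0; pose run_end x := g ^ t.+1 * x %% p %% v == b.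
have rhoE : rho p g v b t
    = count (predI (predC run_end) (precedes_run p v g b t)) (iota 0 p).
  rewrite -[in iota 0 p](prednK (prime_gt0 p_prime)) /= precedes_run0 // andbF add0n.
  rewrite /rho -[in RHS](permP (perm_iota_expn_mod p_prime g_prim)) count_map.
  apply: eq_count => i /=; rewrite /run_end /precedes_run.
  have orbit j : g ^ j * (g ^ i %% p) %% p = g ^ (i + j) %% p.
    by rewrite modnMmr -expnD addnC.
  rewrite orbit addn1 -addnS (eq_all (a2 := fun j => g ^ (i + j) %% p %% v == b)).
    by case: (_ != b); case: (_ != b).
  by move=> j /=; rewrite orbit.
rewrite rhoE addnC -(count_predI_predC run_end (precedes_run p v g b t)).
congr (_ + _).
by apply: eq_count => x; rewrite /= precedes_runS andbC.
Qed.

Local Open Scope ring_scope.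

Lemma int_bounds_subn (r n1 n2 a1 b1 a2 b2 : nat) :
  (r + n2 = n1)%N -> (a1 <= n1 <= b1)%N -> (a2 <= n2 <= b2)%N ->
  a1%:Z - b2%:Z <= r%:Z /\ r%:Z <= b1%:Z - a2%:Z.
Proof. by move=> def_n1 /andP[? ?] /andP[? ?]; split; lia. Qed.

Theorem corollary8 (p v g t b : nat) :
  prime p -> odd p ->
  (1 < v)%N -> (v < p.-1)%N ->
  (2 <= g)%N -> (g <= p.-1)%N -> primitive_root_mod p g ->
  (1 <= t)%N -> (b < v)%N ->
  let qt := (p %/ g ^ t)%N in
  let qt1 := (p %/ g ^ t.+1)%N in
  (((g %/ v) ^ t.-1 * (((v - 1) * g) %/ v) * (qt %/ v))%N%:Z
     - ((ceildiv g v) ^ t * ceildiv ((v - 1) * g) v * ceildiv qt1.+1 v)%N%:Z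
   <= (rho p g v b t)%:Z)
  /\
  ((rho p g v b t)%:Z
   <= ((ceildiv g v) ^ t.-1 * ceildiv ((v - 1) * g) v * ceildiv qt.+1 v)%N%:Z
      - ((g %/ v) ^ t * (((v - 1) * g) %/ v) * (qt1 %/ v))%N%:Z).
Proof.
move=> p_prime _ v_gt1 v_lt_p1 g_ge2 _ g_prim t_ge1 b_lt_v qt qt1; rewrite {}/qt {}/qt1.
have p_gt0 := prime_gt0 p_prime.
have v_gt0 : (0 < v)%N by apply: ltnW.
have g_gt0 : (0 < g)%N by apply: leq_trans g_ge2.
have p_cop_v : coprime p v.
  by rewrite prime_coprime // gtnNdvd // (leq_trans v_lt_p1) ?leq_pred.
case: t t_ge1 => // k _.
apply: int_bounds_subn (rho_add_count_precedes_run v b p_prime g_prim (ltn0Sn k)) _ _.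
  exact: count_precedes_run_bounds.
exact: count_precedes_run_bounds.
Qed.
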